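(* For every smooth Jordan curve $\Gamma\subset \mathbb{R}^2$ there exists $\nu>0$ with the following property. If $A\subset\Gamma$ is a finite $\nu$-dense set in $\Gamma$ and $\varphi\colon A\to X$ is a $\lambda$-Lipschitz map to a geodesic metric space $X$, then the piecewise geodesic extension $\bar{\varphi}\colon \Gamma\to X$ of $\varphi$ is $3\lambda$-Lipschitz.
   Context: $\Gamma$ and $A$ carry the Euclidean metric of $\mathbb{R}^2$. A subset $A\subset B$ is $\nu$-dense in $B$ if every point of $B$ is within distance $\nu$ of a point of $A$. The piecewise geodesic extension $\bar\varphi$ agrees with $\varphi$ on $A$, and on each arc of $\Gamma$ between two consecutive points $a,a'$ of $A$ it is a geodesic from $\varphi(a)$ to $\varphi(a')$ parametrized proportionally to the arc length of $\Gamma$. *)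

From Stdlib Require Import Reals Lra List.
From Coquelicot Require Import Coquelicot.
Open Scope R_scope.

Definition pt := (R * R)%type.
Definition edist (p q : pt) : R :=
  sqrt ((fst p - fst q) ^ 2 + (snd p - snd q) ^ 2).

(* gamma : R -> R^2 is a smooth (C^infinity) Jordan curve of length L > 0,
   parametrized by arc length: L-periodic, injective on [0, L), unit speed. *)
Definition smooth_fun (f : R -> R) : Prop := forall n t, ex_derive_n f n t.

Definition smooth_jordan_arclength (gamma : R -> pt) (L : R) : Prop :=
  0 < L /\
  smooth_fun (fun t => fst (gamma t)) /\
  smooth_fun (fun t => snd (gamma t)) /\
  (forall t, gamma (t + L) = gamma t) /\
  (forall s t, 0 <= s < L -> 0 <= t < L -> gamma s = gamma t -> s = t) /\
  (forall t, (Derive (fun u => fst (gamma u)) t) ^ 2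
           + (Derive (fun u => snd (gamma u)) t) ^ 2 = 1).

Definition on_curve (gamma : R -> pt) (p : pt) : Prop := exists t, gamma t = p.

Definition is_metric {X : Type} (d : X -> X -> R) : Prop :=
  (forall x y, 0 <= d x y) /\
  (forall x y, d x y = 0 <-> x = y) /\
  (forall x y, d x y = d y x) /\
  (forall x y z, d x z <= d x y + d y z).

Definition is_geodesic {X : Type} (d : X -> X -> R) (g : R -> X) (x y : X) : Prop :=
  g 0 = x /\ g 1 = y /\
  (forall s t, 0 <= s <= 1 -> 0 <= t <= 1 -> d (g s) (g t) = Rabs (s - t) * d x y).

Definition geodesic_space {X : Type} (d : X -> X -> R) : Prop :=
  forall x y, exists g : R -> X, is_geodesic d g x y.

Definition dense_in_curve (gamma : R -> pt) (A : list pt) (nu : R) : Prop :=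
  forall p, on_curve gamma p -> exists a, In a A /\ edist p a <= nu.

Definition lipschitz_on {X : Type} (d : X -> X -> R) (S : pt -> Prop)
  (f : pt -> X) (lam : R) : Prop :=
  forall p q, S p -> S q -> d (f p) (f q) <= lam * edist p q.

(* phibar is a piecewise geodesic extension of phi : A -> X along Gamma:
   it agrees with phi on A, and on each arc gamma([s, s']) between two
   consecutive points gamma s, gamma s' of A (s < s' <= s + L, no point of A
   at parameters strictly between) it is a geodesic from phi(gamma s) to
   phi(gamma s') parametrized proportionally to arc length. *)
Definition pw_geodesic_ext {X : Type} (d : X -> X -> R) (gamma : R -> pt) (L : R)
  (A : list pt) (phi phibar : pt -> X) : Prop :=
  (forall a, In a A -> phibar a = phi a) /\
  (forall s s', s < s' -> s' <= s + L ->
     In (gamma s) A -> In (gamma s') A ->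
     (forall u, s < u < s' -> ~ In (gamma u) A) ->
     exists g : R -> X, is_geodesic d g (phi (gamma s)) (phi (gamma s')) /\
       forall t, s <= t <= s' -> phibar (gamma t) = g ((t - s) / (s' - s))).

(* Unit speed makes gamma 1-Lipschitz, and smoothness plus compactness give a
   chord-arc dichotomy: there is eta > 0 such that two points of the curve are
   either at least eta apart, or have parameters (mod L) at arc distance at most
   twice their chord.  With nu = eta / 16, density forces every arc between
   consecutive points of A to have length at most eta / 4.  On each such arc the
   constant-speed geodesic makes phibar o gamma lambda-Lipschitz in the arc-length
   parameter, and passing through the nodes (where phibar = phi) extends this to
   the whole parameter line.  Close pairs thus satisfy d <= lambda * arc
   <= 2 lambda * chord; for far pairs, going through the first nodes of the two
   arcs gives d <= lambda * (chord + eta) <= 2 lambda * chord. *)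

From Stdlib Require Import Reals Rgeom Lra Lia Psatz List ZArith IndefiniteDescription.
From Coquelicot Require Import Coquelicot.
Open Scope R_scope.

Lemma edist_dist_euc (p q : pt) : edist p q = dist_euc (fst p) (snd p) (fst q) (snd q).
Proof. unfold edist, dist_euc. rewrite !Rsqr_pow2. reflexivity. Qed.

Lemma edist_ge0 (p q : pt) : 0 <= edist p q.
Proof. apply sqrt_pos. Qed.

Lemma edist_sym (p q : pt) : edist p q = edist q p.
Proof. rewrite !edist_dist_euc. apply distance_symm. Qed.

Lemma edist_refl (p : pt) : edist p p = 0.
Proof. rewrite edist_dist_euc. apply distance_refl. Qed.

Lemma edist_triangle (p q r : pt) : edist p r <= edist p q + edist q r.
Proof. rewrite !edist_dist_euc. apply triangle. Qed.

Lemma edist_sq (p q : pt) : edist p q ^ 2 = (fst p - fst q) ^ 2 + (snd p - snd q) ^ 2.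
Proof.
  unfold edist. apply pow2_sqrt.
  pose proof (pow2_ge_0 (fst p - fst q)). pose proof (pow2_ge_0 (snd p - snd q)). lra.
Qed.

Lemma edist_eq0 (p q : pt) : edist p q = 0 -> p = q.
Proof.
  intros H. pose proof (edist_sq p q) as Hsq. rewrite H in Hsq.
  destruct p as [p1 p2], q as [q1 q2]; simpl in Hsq.
  pose proof (pow2_ge_0 (p1 - q1)). pose proof (pow2_ge_0 (p2 - q2)).
  assert (p1 = q1) by nra. assert (p2 = q2) by nra. subst. reflexivity.
Qed.

Lemma edist_diff (p q p' q' : pt) : Rabs (edist p q - edist p' q') <= edist p p' + edist q q'.
Proof.
  pose proof (edist_triangle p p' q). pose proof (edist_triangle p' q' q).
  pose proof (edist_triangle p' p q'). pose proof (edist_triangle p q q').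
  rewrite (edist_sym p' p) in *. rewrite (edist_sym q' q) in *.
  apply Rabs_le. lra.
Qed.

Lemma Rabs_dot_le (a b c e : R) :
  Rabs (a * c + b * e) <= sqrt (a ^ 2 + b ^ 2) * sqrt (c ^ 2 + e ^ 2).
Proof.
  pose proof (sqrt_cauchy a b c e). pose proof (sqrt_cauchy (- a) (- b) c e).
  rewrite <- !Rsqr_neg in *. rewrite !Rsqr_pow2 in *. apply Rabs_le. lra.
Qed.

Lemma periodic_Z {T : Type} (f : R -> T) (L : R) :
  (forall t, f (t + L) = f t) -> forall (k : Z) (t : R), f (t + IZR k * L) = f t.
Proof.
  intros Hper k. induction k as [|k IH|k IH] using Z.peano_ind; intros t.
  - f_equal. ring.
  - rewrite succ_IZR, <- (IH t), <- (Hper (t + IZR k * L)). f_equal. ring.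
  - rewrite <- (IH t), <- Hper, <- Z.sub_1_r, minus_IZR. f_equal. ring.
Qed.

Lemma Rmod_decomp (L t : R) : 0 < L -> exists (k : Z) (w : R), 0 <= w < L /\ t = w + IZR k * L.
Proof.
  intros HL. destruct (base_Int_part (t / L)) as [H1 H2].
  exists (Int_part (t / L)), (t - IZR (Int_part (t / L)) * L).
  assert (E : t = t / L * L) by (field; lra).
  split; [split; nra | ring].
Qed.

Lemma Int_part_greatest (r : R) (j : Z) : IZR j <= r -> (j <= Int_part r)%Z.
Proof.
  intros Hj. destruct (base_Int_part r) as [_ Hr].
  assert (Hlt : IZR j < IZR (Int_part r + 1)) by (rewrite plus_IZR; lra).
  apply lt_IZR in Hlt. lia.
Qed.

Lemma ex_derive_continuity_pt (f : R -> R) (x : R) : ex_derive f x -> continuity_pt f x.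
Proof. intros H. apply continuity_pt_filterlim. exact (ex_derive_continuous f x H). Qed.

Lemma lipschitz_continuity_pt (f : R -> R) (K x : R) :
  0 <= K -> (forall a b, Rabs (f a - f b) <= K * Rabs (a - b)) -> continuity_pt f x.
Proof.
  intros HK Hf eps Heps. exists (eps / (K + 1)). split; [apply Rdiv_lt_0_compat; lra|].
  intros y [_ Hy]. simpl in *. unfold R_dist in *.
  apply Rle_lt_trans with (K * Rabs (y - x)); [apply Hf|].
  assert (E : eps = eps / (K + 1) * (K + 1)) by (field; lra).
  pose proof (Rabs_pos (y - x)). nra.
Qed.

Lemma lipschitz_min_attained (f : R -> R) (K a b : R) :
  0 <= K -> a <= b -> (forall x y, Rabs (f x - f y) <= K * Rabs (x - y)) ->
  exists x0, a <= x0 <= b /\ forall x, a <= x <= b -> f x0 <= f x.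
Proof.
  intros HK Hab Hf.
  destruct (continuity_ab_min f a b Hab) as [x0 [Hmin Hx0]].
  - intros c _. exact (lipschitz_continuity_pt f K c HK Hf).
  - exists x0. auto.
Qed.

Lemma lipschitz2_min_attained (h : R -> R -> R) (K a b c e : R) :
  0 <= K -> a <= b -> c <= e ->
  (forall t w w', Rabs (h t w - h t w') <= K * Rabs (w - w')) ->
  (forall t t' w, Rabs (h t w - h t' w) <= K * Rabs (t - t')) ->
  exists t0 w0, a <= t0 <= b /\ c <= w0 <= e /\
    forall t w, a <= t <= b -> c <= w <= e -> h t0 w0 <= h t w.
Proof.
  intros HK Hab Hce Hw Ht.
  destruct (functional_choice (fun t w => c <= w <= e /\
              forall w', c <= w' <= e -> h t w <= h t w')) as [ws Hws].
  { intros t. exact (lipschitz_min_attained (h t) K c e HK Hce (Hw t)). }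
  (* the partial minimum [t |-> h t (ws t)] inherits the Lipschitz bound in [t] *)
  destruct (lipschitz_min_attained (fun t => h t (ws t)) K a b HK Hab) as [t0 [Ht0 Hmin]].
  { intros t t'. destruct (Hws t) as [Hwt Hmt]. destruct (Hws t') as [Hwt' Hmt'].
    pose proof (Hmt _ Hwt'). pose proof (Hmt' _ Hwt).
    pose proof (Ht t t' (ws t')) as H1. pose proof (Ht t' t (ws t)) as H2.
    rewrite (Rabs_minus_sym t' t) in H2. cbv beta.
    apply Rabs_le_between in H1. apply Rabs_le_between in H2. apply Rabs_le_between. lra. }
  exists t0, (ws t0). destruct (Hws t0) as [Hw0 _]. split; [exact Ht0|split; [exact Hw0|]].
  intros t w Hti Hwi. apply Rle_trans with (h t (ws t)); [apply Hmin; exact Hti|].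
  apply (proj2 (Hws t)). exact Hwi.
Qed.

Lemma Derive_lipschitz_on_segment (f : R -> R) (a b : R) :
  a <= b -> smooth_fun f ->
  exists M, 0 <= M /\ forall v w, a <= v <= b -> a <= w <= b ->
    Rabs (Derive f v - Derive f w) <= M * Rabs (v - w).
Proof.
  intros Hab Hf.
  destruct (continuity_ab_maj (fun v => Rabs (Derive (Derive f) v)) a b Hab) as [m [Hm Hma]].
  { intros c _. apply (continuity_pt_comp (Derive (Derive f)) Rabs).
    - apply ex_derive_continuity_pt. exact (Hf 3%nat c).
    - apply Rcontinuity_abs. }
  exists (Rabs (Derive (Derive f) m)). split; [apply Rabs_pos|].
  intros v w Hv Hw.
  destruct (MVT_gen (Derive f) w v (Derive (Derive f))) as [c [Hc E]].
  - intros x _. apply Derive_correct. exact (Hf 2%nat x).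
  - intros x _. apply ex_derive_continuity_pt. exact (Hf 2%nat x).
  - rewrite E, Rabs_mult. apply Rmult_le_compat_r; [apply Rabs_pos|].
    assert (a <= Rmin w v) by (apply Rmin_glb; lra).
    assert (Rmax w v <= b) by (apply Rmax_lub; lra).
    apply Hm. lra.
Qed.

Lemma MVT_projection (f g : R -> R) (e1 e2 t u : R) :
  (forall v, ex_derive f v) -> (forall v, ex_derive g v) ->
  exists c, Rmin t u <= c <= Rmax t u /\
    (e1 * f u + e2 * g u) - (e1 * f t + e2 * g t) = (e1 * Derive f c + e2 * Derive g c) * (u - t).
Proof.
  intros Hf Hg.
  assert (Hd : forall v, is_derive (fun x => e1 * f x + e2 * g x) v (e1 * Derive f v + e2 * Derive g v)).
  { intros v. apply (is_derive_plus (fun x => e1 * f x) (fun x => e2 * g x));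
      apply is_derive_scal, Derive_correct; auto. }
  destruct (MVT_gen (fun x => e1 * f x + e2 * g x) t u
              (fun v => e1 * Derive f v + e2 * Derive g v)) as [c Hc].
  - intros v _. apply Hd.
  - intros v _. apply ex_derive_continuity_pt. eexists. apply Hd.
  - exists c. exact Hc.
Qed.

Lemma list_greatest {T : Type} (l : list T) (P : T -> R -> Prop) :
  l <> nil -> (forall a, In a l -> exists s, P a s /\ forall v, P a v -> v <= s) ->
  exists s, (exists a, In a l /\ P a s) /\ forall a v, In a l -> P a v -> v <= s.
Proof.
  induction l as [|a l IH]; intros Hne Hmax; [contradiction|].
  destruct (Hmax a (or_introl eq_refl)) as [sa [Pa Ha]].
  destruct l as [|b l].
  - exists sa. split; [exists a; split; [left|]; auto|].
    intros c v [<-|[]] Pv. auto.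
  - destruct IH as [s [[c [Hc Pc]] Hs]]; [discriminate|intros c Hc; apply Hmax; right; exact Hc|].
    destruct (Rle_or_lt sa s) as [Hle|Hlt].
    + exists s. split; [exists c; split; [right|]; auto|].
      intros e v [<-|He] Pv; [apply Rle_trans with sa; auto|apply Hs with e; auto].
    + exists sa. split; [exists a; split; [left|]; auto|].
      intros e v [<-|He] Pv; [auto|apply Rle_trans with s; [apply Hs with e; auto|lra]].
Qed.

Lemma list_least {T : Type} (l : list T) (P : T -> R -> Prop) :
  l <> nil -> (forall a, In a l -> exists s, P a s /\ forall v, P a v -> s <= v) ->
  exists s, (exists a, In a l /\ P a s) /\ forall a v, In a l -> P a v -> s <= v.
Proof.
  intros Hne Hmin.
  destruct (list_greatest l (fun a s => P a (- s)) Hne) as [s [[a [Ha Pa]] Hs]].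
  - intros a Ha. destruct (Hmin a Ha) as [s [Ps Hs]].
    exists (- s). rewrite Ropp_involutive. split; [exact Ps|].
    intros v Pv. specialize (Hs _ Pv). lra.
  - exists (- s). split; [exists a; auto|].
    intros b v Hb Pv. assert (- v <= s) by (apply Hs with b; rewrite ?Ropp_involutive; auto).
    lra.
Qed.

Definition consecutive_in (gamma : R -> pt) (L : R) (A : list pt) (s s' : R) : Prop :=
  s < s' /\ s' <= s + L /\ In (gamma s) A /\ In (gamma s') A /\
  forall v, s < v < s' -> ~ In (gamma v) A.

Definition chord_arc (gamma : R -> pt) (L eta : R) : Prop :=
  forall t u, eta <= edist (gamma t) (gamma u) \/
    exists k : Z, Rabs (u + IZR k * L - t) <= 2 * edist (gamma t) (gamma u).

Section JordanCurve.

Variables (gamma : R -> pt) (L : R).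
Hypothesis Hgamma : smooth_jordan_arclength gamma L.

Local Notation gx := (fun u => fst (gamma u)).
Local Notation gy := (fun u => snd (gamma u)).

Lemma curve_L_pos : 0 < L.
Proof. exact (proj1 Hgamma). Qed.

Lemma curve_periodic (k : Z) (t : R) : gamma (t + IZR k * L) = gamma t.
Proof. pose proof Hgamma as (_ & _ & _ & Hper & _). exact (periodic_Z gamma L Hper k t). Qed.

Lemma curve_ex_derive_x (v : R) : ex_derive gx v.
Proof. pose proof Hgamma as (_ & Hx & _). exact (Hx 1%nat v). Qed.

Lemma curve_ex_derive_y (v : R) : ex_derive gy v.
Proof. pose proof Hgamma as (_ & _ & Hy & _). exact (Hy 1%nat v). Qed.

Lemma curve_unit_speed (v : R) : (Derive gx v) ^ 2 + (Derive gy v) ^ 2 = 1.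
Proof. pose proof Hgamma as (_ & _ & _ & _ & _ & Hunit). exact (Hunit v). Qed.

Lemma curve_same_point (v w : R) : gamma v = gamma w -> exists k : Z, v = w + IZR k * L.
Proof.
  pose proof Hgamma as (HL & _ & _ & _ & Hinj & _). intros E.
  destruct (Rmod_decomp L v HL) as [k1 [v0 [Hv0 ->]]].
  destruct (Rmod_decomp L w HL) as [k2 [w0 [Hw0 ->]]].
  rewrite !curve_periodic in E.
  pose proof (Hinj v0 w0 Hv0 Hw0 E) as <-.
  exists (k1 - k2)%Z. rewrite minus_IZR. ring.
Qed.

Lemma curve_lipschitz (t u : R) : edist (gamma t) (gamma u) <= Rabs (t - u).
Proof.
  set (e1 := fst (gamma u) - fst (gamma t)). set (e2 := snd (gamma u) - snd (gamma t)).
  destruct (MVT_projection gx gy e1 e2 t u curve_ex_derive_x curve_ex_derive_y) as [c [_ Hc]].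
  pose proof (curve_unit_speed c) as Hunit.
  pose proof (Rabs_dot_le e1 e2 (Derive gx c) (Derive gy c)) as Hcs.
  rewrite Hunit, sqrt_1, Rmult_1_r in Hcs.
  replace (sqrt (e1 ^ 2 + e2 ^ 2)) with (edist (gamma t) (gamma u)) in Hcs
    by (unfold edist, e1, e2; f_equal; ring).
  (* project on the chord [D] itself: [|D|^2 = D . gamma'(c) (u - t) <= |D| |u - t|] *)
  assert (Hsq : edist (gamma t) (gamma u) ^ 2 =
                (e1 * Derive gx c + e2 * Derive gy c) * (u - t))
    by (rewrite edist_sq, <- Hc; unfold e1, e2; ring).
  pose proof (edist_ge0 (gamma t) (gamma u)).
  pose proof (Rle_abs ((e1 * Derive gx c + e2 * Derive gy c) * (u - t))) as Habs.
  rewrite Rabs_mult, Rabs_minus_sym in Habs. pose proof (Rabs_pos (t - u)).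
  nra.
Qed.

Lemma chord_ge_half_arc (t u : R) : t <= u ->
  (forall c, t <= c <= u -> Rabs (Derive gx c - Derive gx t) <= 1 / 2 /\
                             Rabs (Derive gy c - Derive gy t) <= 1 / 2) ->
  u - t <= 2 * edist (gamma t) (gamma u).
Proof.
  intros Htu Hclose.
  set (e1 := Derive gx t). set (e2 := Derive gy t).
  destruct (MVT_projection gx gy e1 e2 t u curve_ex_derive_x curve_ex_derive_y) as [c [Hc E]].
  rewrite Rmin_left, Rmax_right in Hc by lra.
  destruct (Hclose c Hc) as [Hcx Hcy]. fold e1 e2 in Hcx, Hcy.
  pose proof (curve_unit_speed c) as Hc1. pose proof (curve_unit_speed t) as Ht1.
  fold e1 e2 in Ht1.
  set (a := Derive gx c) in *. set (b := Derive gy c) in *.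
  (* two unit vectors at distance at most 1/sqrt 2 have inner product at least 3/4 *)
  assert (Hdot : 3 / 4 <= e1 * a + e2 * b).
  { pose proof (Rabs_pos (a - e1)). pose proof (Rabs_pos (b - e2)).
    assert ((a - e1) ^ 2 <= 1 / 4) by (rewrite <- pow2_abs; nra).
    assert ((b - e2) ^ 2 <= 1 / 4) by (rewrite <- pow2_abs; nra).
    nra. }
  pose proof (Rabs_dot_le e1 e2 (fst (gamma u) - fst (gamma t)) (snd (gamma u) - snd (gamma t)))
    as Hcs.
  rewrite Ht1, sqrt_1, Rmult_1_l in Hcs.
  replace (sqrt ((fst (gamma u) - fst (gamma t)) ^ 2 + (snd (gamma u) - snd (gamma t)) ^ 2))
    with (edist (gamma t) (gamma u)) in Hcs by (unfold edist; f_equal; ring).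
  apply Rabs_le_between in Hcs.
  assert (Hproj : e1 * (fst (gamma u) - fst (gamma t)) + e2 * (snd (gamma u) - snd (gamma t))
                  = (e1 * a + e2 * b) * (u - t)) by (rewrite <- E; ring).
  nra.
Qed.

Lemma local_chord_arc : exists delta, 0 < delta <= L / 4 /\
  forall t u, Rabs (u - t) <= delta -> Rabs (u - t) <= 2 * edist (gamma t) (gamma u).
Proof.
  pose proof Hgamma as (HL & Hx & Hy & _).
  destruct (Derive_lipschitz_on_segment gx 0 (2 * L)) as [Mx [HMx Hlx]]; [lra|exact Hx|].
  destruct (Derive_lipschitz_on_segment gy 0 (2 * L)) as [My [HMy Hly]]; [lra|exact Hy|].
  set (delta := Rmin (L / 4) (/ (2 * (Mx + My + 1)))).
  assert (Hdelta : 0 < delta) by (apply Rmin_glb_lt; [lra|apply Rinv_0_lt_compat; lra]).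
  assert (HMdelta : (Mx + My) * delta <= 1 / 2).
  { assert (delta <= / (2 * (Mx + My + 1))) by apply Rmin_r.
    assert ((Mx + My + 1) * / (2 * (Mx + My + 1)) = 1 / 2) by (field; lra).
    nra. }
  assert (Hord : forall t u, t <= u <= t + delta -> u - t <= 2 * edist (gamma t) (gamma u)).
  { intros t u Htu.
    destruct (Rmod_decomp L t HL) as [k [t0 [Ht0 ->]]].
    replace u with ((u - IZR k * L) + IZR k * L) by ring. rewrite !curve_periodic.
    set (u0 := u - IZR k * L).
    replace (u0 + IZR k * L - (t0 + IZR k * L)) with (u0 - t0) by ring.
    assert (delta <= L / 4) by apply Rmin_l.
    apply chord_ge_half_arc; [unfold u0; lra|].
    intros c Hc. pose proof (Rabs_pos (c - t0)).
    assert (Rabs (c - t0) <= delta) by (rewrite Rabs_pos_eq; unfold u0 in *; lra).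
    pose proof (Hlx c t0 ltac:(unfold u0 in *; lra) ltac:(lra)).
    pose proof (Hly c t0 ltac:(unfold u0 in *; lra) ltac:(lra)).
    split; nra. }
  exists delta. split; [split; [exact Hdelta|apply Rmin_l]|].
  intros t u Hd. destruct (Rle_or_lt t u) as [Htu|Htu].
  - rewrite Rabs_pos_eq in * by lra. apply Hord. lra.
  - rewrite Rabs_left in * by lra. rewrite edist_sym.
    replace (- (u - t)) with (t - u) in * by ring. apply Hord. lra.
Qed.

Lemma separation (delta : R) : 0 < delta -> delta <= L / 2 ->
  exists eta, 0 < eta /\
    forall t w, delta <= w <= L - delta -> eta <= edist (gamma t) (gamma (t + w)).
Proof.
  intros Hd HdL. pose proof curve_L_pos as HL.
  set (h := fun t w => edist (gamma t) (gamma (t + w))).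
  destruct (lipschitz2_min_attained h 2 0 L delta (L - delta)) as [t0 [w0 [Ht0 [Hw0 Hmin]]]];
    try lra.
  - intros t w w'. unfold h. eapply Rle_trans; [apply edist_diff|].
    rewrite edist_refl, Rplus_0_l. eapply Rle_trans; [apply curve_lipschitz|].
    replace (t + w - (t + w')) with (w - w') by ring. pose proof (Rabs_pos (w - w')). lra.
  - intros t t' w. unfold h. eapply Rle_trans; [apply edist_diff|].
    pose proof (curve_lipschitz t t'). pose proof (curve_lipschitz (t + w) (t' + w)).
    replace (t + w - (t' + w)) with (t - t') in * by ring. lra.
  - exists (h t0 w0). split.
    + destruct (edist_ge0 (gamma t0) (gamma (t0 + w0))) as [Hpos|E]; [exact Hpos|exfalso].
      symmetry in E. apply edist_eq0, curve_same_point in E. destruct E as [k Ek].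
      (* [0 < w0 < L] cannot be a multiple of the period *)
      assert (Hk : 0 < IZR (- k) < 1) by (rewrite opp_IZR; split; nra).
      destruct Hk as [Hk0 Hk1]. apply lt_IZR in Hk0. apply lt_IZR in Hk1. lia.
    + intros t w Hw. destruct (Rmod_decomp L t HL) as [k [t1 [Ht1 ->]]].
      replace (t1 + IZR k * L + w) with ((t1 + w) + IZR k * L) by ring.
      rewrite !curve_periodic. apply (Hmin t1 w); lra.
Qed.

Lemma chord_arc_exists : exists eta, 0 < eta <= L /\ chord_arc gamma L eta.
Proof.
  pose proof curve_L_pos as HL.
  destruct local_chord_arc as [delta [[Hd HdL] Hloc]].
  destruct (separation delta Hd ltac:(lra)) as [eta [Heta Hsep]].
  exists (Rmin eta L). split; [split; [apply Rmin_glb_lt; lra|apply Rmin_r]|].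
  intros t u.
  destruct (Rmod_decomp L (u - t) HL) as [k [w [Hw Euw]]].
  assert (Hu : forall j : Z, gamma (t + w + IZR j * L) = gamma u).
  { intros j. rewrite curve_periodic, <- (curve_periodic k (t + w)). f_equal. lra. }
  destruct (Rle_or_lt w delta) as [Hsmall|Hsmall];
    [|destruct (Rle_or_lt (L - delta) w) as [Hlarge|Hmid]].
  - right. exists (- k)%Z. rewrite <- (Hu 0%Z), Rmult_0_l, Rplus_0_r.
    replace (u + IZR (- k) * L - t) with (t + w - t) by (rewrite opp_IZR; lra).
    apply Hloc. replace (t + w - t) with w by ring. rewrite Rabs_pos_eq; lra.
  - right. exists (- k - 1)%Z. rewrite <- (Hu (-1)%Z).
    replace (u + IZR (- k - 1) * L - t) with (t + w + IZR (-1) * L - t)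
      by (rewrite minus_IZR, opp_IZR; simpl; lra).
    apply Hloc. simpl. replace (t + w + -1 * L - t) with (w - L) by ring.
    rewrite Rabs_left1; lra.
  - left. rewrite <- (Hu 0%Z), Rmult_0_l, Rplus_0_r.
    pose proof (Rmin_l eta L). pose proof (Hsep t w ltac:(lra)). lra.
Qed.

Lemma greatest_param_below (a : pt) (x : R) : on_curve gamma a ->
  exists s, gamma s = a /\ s <= x /\ forall v, gamma v = a -> v <= x -> v <= s.
Proof.
  intros [tau <-]. pose proof curve_L_pos as HL.
  set (r := (x - tau) / L). assert (Er : r * L = x - tau) by (unfold r; field; lra).
  destruct (base_Int_part r) as [Hk _].
  exists (tau + IZR (Int_part r) * L). split; [apply curve_periodic|split; [nra|]].
  intros v Hv Hvx. destruct (curve_same_point v tau Hv) as [j ->].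
  assert (Hj : IZR j <= IZR (Int_part r)).
  { apply IZR_le, Int_part_greatest. apply (Rmult_le_reg_r L); lra. }
  nra.
Qed.

Lemma least_param_above (a : pt) (y : R) : on_curve gamma a ->
  exists s, gamma s = a /\ y < s /\ forall v, gamma v = a -> y < v -> s <= v.
Proof.
  intros Ha. pose proof curve_L_pos as HL.
  destruct (greatest_param_below a y Ha) as [s [<- [Hsy Hs]]].
  assert (Hnext : gamma (s + L) = gamma s) by (rewrite <- (curve_periodic 1 s); f_equal; ring).
  exists (s + L). split; [exact Hnext|split].
  - destruct (Rle_or_lt (s + L) y) as [Hle|Hlt]; [|exact Hlt].
    pose proof (Hs (s + L) Hnext Hle). lra.
  - intros v Hv Hyv. destruct (curve_same_point v s Hv) as [j ->].
    destruct (Z_le_gt_dec j 0) as [Hj|Hj].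
    + apply IZR_le in Hj. nra.
    + assert (1 <= IZR j) by (apply IZR_le; lia). nra.
Qed.

Lemma consecutive_cover (A : list pt) :
  (forall a, In a A -> on_curve gamma a) -> A <> nil ->
  forall x, exists s s', consecutive_in gamma L A s s' /\ s <= x <= s'.
Proof.
  intros HA Hne x.
  destruct (list_greatest A (fun a s => gamma s = a /\ s <= x) Hne)
    as [s [[a [Ha [<- Hsx]]] Hs]].
  { intros a Ha. destruct (greatest_param_below a x (HA a Ha)) as [s [Es [Hsx Hmax]]].
    exists s. split; [auto|]. intros v [Ev Hvx]. auto. }
  destruct (list_least A (fun a s' => gamma s' = a /\ s < s') Hne)
    as [s' [[b [Hb [<- Hss']]] Hs']].
  { intros b Hb. destruct (least_param_above b s (HA b Hb)) as [s' [Es' [Hss' Hmin]]].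
    exists s'. split; [auto|]. intros v [Ev Hsv]. auto. }
  exists s, s'. split; [repeat split; auto|].
  - apply (Hs' (gamma s) (s + L) Ha). split; [|pose proof curve_L_pos; lra].
    rewrite <- (curve_periodic 1 s). f_equal. ring.
  - intros v Hv Hin. pose proof (Hs' (gamma v) v Hin (conj eq_refl (proj1 Hv))). lra.
  - split; [exact Hsx|]. destruct (Rle_or_lt x s') as [Hle|Hlt]; [exact Hle|].
    pose proof (Hs (gamma s') s' Hb (conj eq_refl (Rlt_le _ _ Hlt))). lra.
Qed.

Lemma consecutive_length (A : list pt) (eta nu s s' : R) :
  chord_arc gamma L eta -> nu < eta ->
  (forall a, In a A -> on_curve gamma a) -> dense_in_curve gamma A nu ->
  consecutive_in gamma L A s s' -> s' - s <= 4 * nu.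
Proof.
  intros Hca Hnu HA Hdense (Hss & _ & _ & _ & Hgap).
  set (m := (s + s') / 2).
  destruct (Hdense (gamma m) (ex_intro _ m eq_refl)) as [a [Ha Hma]].
  destruct (HA a Ha) as [tau <-].
  destruct (Hca m tau) as [Hfar|[k Hk]]; [lra|].
  (* this parameter of the point of [A] near [gamma m] lies outside the gap [(s, s')] *)
  set (v := tau + IZR k * L) in Hk.
  assert (Hout : v <= s \/ s' <= v).
  { destruct (Rle_or_lt v s) as [Hle|Hlt]; [left; exact Hle|right].
    destruct (Rle_or_lt s' v) as [Hle'|Hlt']; [exact Hle'|].
    exfalso. apply (Hgap v); [lra|]. unfold v. rewrite curve_periodic. exact Ha. }
  apply Rabs_le_between in Hk. unfold m in *. lra.
Qed.

Lemma dense_distinct_points (A : list pt) (eta nu : R) :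
  0 < eta <= L -> chord_arc gamma L eta -> nu < eta / 8 -> dense_in_curve gamma A nu ->
  exists a b, In a A /\ In b A /\ a <> b.
Proof.
  intros [Heta HetaL] Hca Hnu Hdense.
  assert (Hfar : eta / 4 <= edist (gamma 0) (gamma (L / 2))).
  { destruct (Hca 0 (L / 2)) as [Hfar|[k Hk]]; [lra|].
    assert (L / 2 <= Rabs (L / 2 + IZR k * L - 0)).
    { destruct (Z_le_gt_dec 0 k) as [Hk0|Hk0].
      - apply IZR_le in Hk0. rewrite Rabs_pos_eq; nra.
      - assert (Hk1 : IZR k <= -1) by (apply IZR_le; lia). rewrite Rabs_left; nra. }
    lra. }
  destruct (Hdense (gamma 0) (ex_intro _ 0 eq_refl)) as [a [Ha Hda]].
  destruct (Hdense (gamma (L / 2)) (ex_intro _ (L / 2) eq_refl)) as [b [Hb Hdb]].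
  exists a, b. split; [exact Ha|split; [exact Hb|]]. intros <-.
  pose proof (edist_triangle (gamma 0) a (gamma (L / 2))).
  rewrite (edist_sym a) in *. lra.
Qed.

End JordanCurve.

Lemma geodesic_reparam_lipschitz {X : Type} (d : X -> X -> R) (g : R -> X) (x y : X)
    (lam s s' : R) :
  is_geodesic d g x y -> s < s' -> d x y <= lam * (s' - s) ->
  forall v w, s <= v <= s' -> s <= w <= s' ->
  d (g ((v - s) / (s' - s))) (g ((w - s) / (s' - s))) <= lam * Rabs (v - w).
Proof.
  intros (_ & _ & Hg) Hss Hxy v w Hv Hw.
  assert (Hunit : forall z, s <= z <= s' -> 0 <= (z - s) / (s' - s) <= 1).
  { intros z Hz. assert (E : (z - s) / (s' - s) * (s' - s) = z - s) by (field; lra).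
    split; [apply Rdiv_le_0_compat; lra|nra]. }
  rewrite Hg by auto.
  replace ((v - s) / (s' - s) - (w - s) / (s' - s)) with ((v - w) * / (s' - s)) by (field; lra).
  rewrite Rabs_mult, (Rabs_inv (s' - s)), (Rabs_pos_eq (s' - s)) by lra.
  assert (Hinv : 0 < / (s' - s)) by (apply Rinv_0_lt_compat; lra).
  pose proof (Rabs_pos (v - w)).
  apply Rle_trans with (Rabs (v - w) * / (s' - s) * (lam * (s' - s))).
  - apply Rmult_le_compat_l; [nra|exact Hxy].
  - right. field. lra.
Qed.

Lemma lipschitz_on_nonneg {X : Type} (d : X -> X -> R) (S : pt -> Prop) (f : pt -> X)
    (lam : R) (p q : pt) :
  is_metric d -> lipschitz_on d S f lam -> S p -> S q -> p <> q -> 0 <= lam.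
Proof.
  intros (Hd0 & _) Hf Hp Hq Hpq.
  pose proof (Hf p q Hp Hq). pose proof (Hd0 (f p) (f q)).
  assert (0 < edist p q).
  { destruct (edist_ge0 p q) as [Hpos|E]; [exact Hpos|].
    symmetry in E. apply edist_eq0 in E. contradiction. }
  nra.
Qed.

Section PiecewiseGeodesicExtension.

Variables (X : Type) (d : X -> X -> R) (gamma : R -> pt) (L : R) (A : list pt)
  (phi phibar : pt -> X) (lam : R).
Hypothesis Hd : is_metric d.
Hypothesis Hlam : 0 <= lam.
Hypothesis Hgamma : forall t u, edist (gamma t) (gamma u) <= Rabs (t - u).
Hypothesis Hphi : lipschitz_on d (fun a => In a A) phi lam.
Hypothesis Hext : pw_geodesic_ext d gamma L A phi phibar.
Hypothesis Hcover : forall x, exists s s', consecutive_in gamma L A s s' /\ s <= x <= s'.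

Lemma phibar_nodes_lipschitz (s s' : R) : In (gamma s) A -> In (gamma s') A ->
  d (phibar (gamma s)) (phibar (gamma s')) <= lam * edist (gamma s) (gamma s').
Proof.
  intros Hs Hs'. rewrite !(proj1 Hext) by assumption. apply Hphi; assumption.
Qed.

Lemma phibar_arc_lipschitz (s s' v w : R) : consecutive_in gamma L A s s' ->
  s <= v <= s' -> s <= w <= s' ->
  d (phibar (gamma v)) (phibar (gamma w)) <= lam * Rabs (v - w).
Proof.
  intros (Hss & HsL & Hs & Hs' & Hgap) Hv Hw.
  destruct (proj2 Hext s s' Hss HsL Hs Hs' Hgap) as [g [Hg Hbar]].
  rewrite (Hbar v Hv), (Hbar w Hw).
  apply (geodesic_reparam_lipschitz d g _ _ lam s s' Hg Hss); try assumption.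
  apply Rle_trans with (lam * edist (gamma s) (gamma s')); [apply Hphi; assumption|].
  apply Rmult_le_compat_l; [exact Hlam|].
  eapply Rle_trans; [apply Hgamma|]. rewrite Rabs_left1; lra.
Qed.

Lemma phibar_param_lipschitz (t u : R) :
  d (phibar (gamma t)) (phibar (gamma u)) <= lam * Rabs (t - u).
Proof.
  pose proof Hd as (_ & _ & Hsym & Htri).
  assert (Hord : forall t u, t <= u -> d (phibar (gamma t)) (phibar (gamma u)) <= lam * (u - t)).
  { clear t u. intros t u Htu.
    destruct (Hcover t) as [s1 [s1' [Harc1 Ht1]]].
    destruct (Rle_or_lt u s1') as [Hu|Hu].
    { rewrite <- (Rabs_pos_eq (u - t)), Rabs_minus_sym by lra.
      apply (phibar_arc_lipschitz s1 s1'); [exact Harc1|lra|lra]. }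
    destruct (Hcover u) as [s2 [s2' [Harc2 Hu2]]].
    pose proof Harc1 as (_ & _ & _ & Hs1' & _). pose proof Harc2 as (_ & _ & Hs2 & _ & Hgap2).
    (* the node [s1'] cannot lie inside the arc [(s2, s2')] that contains [u] *)
    assert (H12 : s1' <= s2).
    { destruct (Rle_or_lt s1' s2) as [Hle|Hlt]; [exact Hle|exfalso].
      apply (Hgap2 s1'); [lra|exact Hs1']. }
    pose proof (phibar_arc_lipschitz s1 s1' t s1' Harc1 ltac:(lra) ltac:(lra)) as B1.
    pose proof (Hgamma s1' s2) as E12.
    pose proof (phibar_nodes_lipschitz s1' s2 Hs1' Hs2) as B2.
    pose proof (phibar_arc_lipschitz s2 s2' s2 u Harc2 ltac:(lra) ltac:(lra)) as B3.
    rewrite Rabs_left1 in B1, E12 by lra. rewrite Rabs_left1 in B3 by lra.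
    pose proof (Htri (phibar (gamma t)) (phibar (gamma s1')) (phibar (gamma u))).
    pose proof (Htri (phibar (gamma s1')) (phibar (gamma s2)) (phibar (gamma u))).
    nra. }
  destruct (Rle_or_lt t u) as [Htu|Htu].
  - rewrite Rabs_left1 by lra. replace (- (t - u)) with (u - t) by ring. auto.
  - rewrite Rabs_pos_eq, Hsym by lra. apply Hord. lra.
Qed.

Lemma phibar_chord_bound (ell t u : R) :
  (forall s s', consecutive_in gamma L A s s' -> s' - s <= ell) ->
  d (phibar (gamma t)) (phibar (gamma u)) <= lam * (edist (gamma t) (gamma u) + 4 * ell).
Proof.
  intros Hlen. pose proof Hd as (_ & _ & _ & Htri).
  destruct (Hcover t) as [s1 [s1' [Harc1 Ht1]]].
  destruct (Hcover u) as [s2 [s2' [Harc2 Hu2]]].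
  pose proof (Hlen _ _ Harc1). pose proof (Hlen _ _ Harc2).
  pose proof (phibar_arc_lipschitz s1 s1' t s1 Harc1 ltac:(lra) ltac:(lra)) as B1.
  pose proof Harc1 as (_ & _ & Hs1 & _). pose proof Harc2 as (_ & _ & Hs2 & _).
  pose proof (phibar_nodes_lipschitz s1 s2 Hs1 Hs2) as B2.
  pose proof (phibar_arc_lipschitz s2 s2' s2 u Harc2 ltac:(lra) ltac:(lra)) as B3.
  pose proof (Hgamma s1 t) as E1. pose proof (Hgamma u s2) as E3.
  rewrite Rabs_pos_eq in B1, E3 by lra. rewrite Rabs_left1 in B3, E1 by lra.
  pose proof (edist_triangle (gamma s1) (gamma t) (gamma s2)).
  pose proof (edist_triangle (gamma t) (gamma u) (gamma s2)).
  pose proof (Htri (phibar (gamma t)) (phibar (gamma s1)) (phibar (gamma u))).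
  pose proof (Htri (phibar (gamma s1)) (phibar (gamma s2)) (phibar (gamma u))).
  nra.
Qed.

End PiecewiseGeodesicExtension.

Theorem lemma4p2 (gamma : R -> pt) (L : R) :
  smooth_jordan_arclength gamma L ->
  exists nu : R, 0 < nu /\
    forall (X : Type) (d : X -> X -> R), is_metric d -> geodesic_space d ->
    forall (A : list pt), (forall a, In a A -> on_curve gamma a) ->
    dense_in_curve gamma A nu ->
    forall (lam : R) (phi : pt -> X),
      lipschitz_on d (fun a => In a A) phi lam ->
    forall phibar : pt -> X,
      pw_geodesic_ext d gamma L A phi phibar ->
      lipschitz_on d (on_curve gamma) phibar (3 * lam).
Proof.
  intros Hgamma.
  destruct (chord_arc_exists gamma L Hgamma) as [eta [Heta Hca]].
  exists (eta / 16). split; [lra|].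
  intros X d Hd _ A HA Hdense lam phi Hphi phibar Hext p q [t <-] [u <-].
  destruct (dense_distinct_points gamma L A eta (eta / 16) Heta Hca ltac:(lra) Hdense)
    as [a [b [Ha [Hb Hab]]]].
  pose proof (lipschitz_on_nonneg d _ phi lam a b Hd Hphi Ha Hb Hab) as Hlam.
  assert (Hne : A <> nil) by (intros ->; destruct Ha).
  pose proof (consecutive_cover gamma L Hgamma A HA Hne) as Hcover.
  assert (Hlen : forall s s', consecutive_in gamma L A s s' -> s' - s <= eta / 4).
  { intros s s' Hss. pose proof (consecutive_length gamma L Hgamma A eta (eta / 16) s s'
                                   Hca ltac:(lra) HA Hdense Hss). lra. }
  pose proof (curve_lipschitz gamma L Hgamma) as Hgamma1.
  pose proof (edist_ge0 (gamma t) (gamma u)).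
  destruct (Hca t u) as [Hfar|[k Hk]].
  - pose proof (phibar_chord_bound X d gamma L A phi phibar lam Hd Hlam Hgamma1 Hphi Hext Hcover
                  (eta / 4) t u Hlen).
    nra.
  - rewrite <- (curve_periodic gamma L Hgamma k u) in Hk |- *.
    pose proof (phibar_param_lipschitz X d gamma L A phi phibar lam Hd Hlam Hgamma1 Hphi Hext Hcover
                  t (u + IZR k * L)) as Hclose.
    rewrite Rabs_minus_sym in Hclose.
    set (v := u + IZR k * L) in *. pose proof (Rabs_pos (v - t)). nra.
Qed.
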